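(* Let $G=(V,E)$ be any graph (finite or infinite) and let $F$ and $F'$ be two partitions of $V$ each consisting of maximal ``strong'' partitive sets of $G$. Then $F=F'$.
   Context: A graph $G=(V,E)$ has vertex set $V$ and edge set $E\subseteq V^2$. A set $X\subseteq V$ is a partitive set of $G$ if for all $a,b\in X$ and $c\in V\setminus X$: $(a,c)\in E\Leftrightarrow(b,c)\in E$ and $(c,a)\in E\Leftrightarrow(c,b)\in E$; $I(G)$ is the class of partitive sets. A ``strong'' partitive set is an $X\in I(G)$ such that for every $Y\in I(G)$ with $X\cap Y\neq\emptyset$, $X\subseteq Y$ or $Y\subseteq X$; $I_F(G)$ is their class. A maximal ``strong'' partitive set is an element of $I_F(G)\setminus\{V\}$ maximal for inclusion in $I_F(G)\setminus\{V\}$. *)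

From mathcomp Require Import all_boot.
From mathcomp Require Import boolp classical_sets.
Set Implicit Arguments. Unset Strict Implicit. Unset Printing Implicit Defensive.
Local Open Scope classical_set_scope.

Definition partitive (V : Type) (E : V -> V -> Prop) (X : set V) : Prop :=
  forall a b c, X a -> X b -> ~ X c ->
    (E a c <-> E b c) /\ (E c a <-> E c b).

Definition strong_partitive (V : Type) (E : V -> V -> Prop) (X : set V) : Prop :=
  partitive E X /\
  forall Y, partitive E Y -> X `&` Y !=set0 -> X `<=` Y \/ Y `<=` X.

Definition max_strong_partitive (V : Type) (E : V -> V -> Prop) (X : set V) : Prop :=
  strong_partitive E X /\ X <> setT /\
  forall Y, strong_partitive E Y -> Y <> setT -> X `<=` Y -> Y = X.

Definition is_partition (V : Type) (F : set (set V)) : Prop :=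
  (forall X, F X -> X !=set0) /\
  (forall X Y, F X -> F Y -> X `&` Y !=set0 -> X = Y) /\
  (forall v : V, exists X, F X /\ X v).

From mathcomp Require Import all_boot.
From mathcomp Require Import boolp classical_sets.
Local Open Scope classical_set_scope.

(* Two intersecting maximal strong partitive sets are comparable (one is
   strong, the other partitive), hence equal by maximality of the smaller one;
   so each block of one partition is the block of the other that meets it. *)

Lemma max_strong_partitive_eq (V : Type) (E : V -> V -> Prop) (X Y : set V) :
  max_strong_partitive E X -> max_strong_partitive E Y ->
  X `&` Y !=set0 -> X = Y.
Proof.
move=> [sX [XnT maxX]] [sY [YnT maxY]] XY.
have [pY _] := sY.
have [_ cmpX] := sX.
case: (cmpX Y pY XY) => [XsubY | YsubX].
- by symmetry; apply: maxX.
- exact: maxY.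
Qed.

Lemma partition_sub_max_strong_cover (V : Type) (E : V -> V -> Prop)
    (F F' : set (set V)) :
  is_partition F -> (forall X, F X -> max_strong_partitive E X) ->
  (forall v, exists X, F' X /\ X v) ->
  (forall X, F' X -> max_strong_partitive E X) ->
  F `<=` F'.
Proof.
move=> [nonempty _] maxF cover' maxF' X FX.
have [v Xv] := nonempty X FX.
have [X' [F'X' X'v]] := cover' v.
suff -> : X = X' by [].
by apply: max_strong_partitive_eq (maxF X FX) (maxF' X' F'X') _; exists v.
Qed.

Theorem lemma4p2 (V : Type) (E : V -> V -> Prop) (F F' : set (set V)) :
  is_partition F -> (forall X, F X -> max_strong_partitive E X) ->
  is_partition F' -> (forall X, F' X -> max_strong_partitive E X) ->
  F = F'.
Proof.
move=> partF maxF partF' maxF'.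
have [_ [_ coverF]] := partF.
have [_ [_ coverF']] := partF'.
apply/seteqP; split.
- exact: partition_sub_max_strong_cover partF maxF coverF' maxF'.
- exact: partition_sub_max_strong_cover partF' maxF' coverF maxF.
Qed.
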